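(* A real number $\beta>1$ is a well-posed Salem number of degree 6 if and only if $\beta$ is the dominant root of a polynomial in $\mathbb Z[x]$ of the form $P(x)=x^6-ax^{5}-bx^{4}-cx^{3}-bx^{2}-ax+1$ (with $a,b,c\in\mathbb Z$) satisfying the following conditions: (1) $2-2b<2a+c$; (2) $c<2a$; (3) $|b+2|<c-a$.
   Context: A Salem number is an algebraic integer $>1$ all of whose conjugates have modulus not greater than one, with at least one conjugate of modulus one. For a sextic Salem number $\beta$ with minimal polynomial $P(x)=x^6-ax^{5}-bx^{4}-cx^{3}-bx^{2}-ax+1$, its trace polynomial is $Q(y)=y^3-ay^2-(b+3)y-(c-2a)=(y-\gamma)(y-\alpha_1)(y-\alpha_2)$, obtained by writing $P(x)/x^3=Q(y)$ with $y=x+x^{-1}$ (so $\gamma=\beta+1/\beta$). The Salem number $\beta$ is called well-posed if its trace polynomial $Q(y)$ has three roots $\gamma,\alpha_1,\alpha_2$ such that $-1<\alpha_1<0<\alpha_2<1<2<\gamma$. *)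

From HB Require Import structures.
From mathcomp Require Import all_boot all_order all_algebra.
From mathcomp Require Import complex.
From mathcomp Require Import reals.
Set Implicit Arguments. Unset Strict Implicit. Unset Printing Implicit Defensive.
Import Order.TTheory GRing.Theory Num.Theory.
Local Open Scope ring_scope.

Definition polyC_of (R : realType) (P : {poly int}) : {poly R[i]} :=
  map_poly (fun z : int => z%:~R) P.

Definition polyR_of (R : realType) (P : {poly int}) : {poly R} :=
  map_poly (fun z : int => z%:~R) P.

Definition is_min_poly_int (R : realType) (P : {poly int}) (beta : R) : Prop :=
  [/\ P \is monic,
      irreducible_poly (map_poly (fun z : int => z%:~R) P : {poly rat})
    & root (polyR_of R P) beta].

(* The conjugates of beta are the complex roots of its minimal polynomial. *)
Definition salem (R : realType) (beta : R) : Prop :=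
  1 < beta /\
  exists P : {poly int},
    [/\ is_min_poly_int P beta,
        (forall z : R[i], root (polyC_of R P) z -> z != (beta%:C)%C -> `|z| <= 1)
      & (exists z : R[i], root (polyC_of R P) z /\ `|z| = 1)].

Definition sextP (a b c : int) : {poly int} :=
  'X^6 - a%:P * 'X^5 - b%:P * 'X^4 - c%:P * 'X^3 - b%:P * 'X^2 - a%:P * 'X + 1.

Definition traceQ (a b c : int) : {poly int} :=
  'X^3 - a%:P * 'X^2 - (b + 3)%:P * 'X - (c - 2 * a)%:P.

Definition well_posed_salem6 (R : realType) (beta : R) : Prop :=
  salem beta /\
  exists a b c : int,
    is_min_poly_int (sextP a b c) beta /\
    exists alpha1 alpha2 gamma : R,
      [/\ gamma = beta + beta^-1,
          root (polyR_of R (traceQ a b c)) gamma,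
          root (polyR_of R (traceQ a b c)) alpha1,
          root (polyR_of R (traceQ a b c)) alpha2
        & [/\ -1 < alpha1, alpha1 < 0, 0 < alpha2, alpha2 < 1 & 2 < gamma]].

Definition dominant_root (R : realType) (P : {poly int}) (beta : R) : Prop :=
  root (polyR_of R P) beta /\
  forall z : R[i], root (polyC_of R P) z -> `|z| <= `|(beta%:C)%C|.

From HB Require Import structures.
From mathcomp Require Import all_boot all_order all_algebra.
From mathcomp Require Import algC algnum complex polyrcf.
From mathcomp Require Import reals.
From mathcomp Require Import ring lra zify.
Set Implicit Arguments. Unset Strict Implicit. Unset Printing Implicit Defensive.
Import Order.TTheory GRing.Theory Num.Theory.
Local Open Scope ring_scope.

(* With y = x + 1/x we have P(x) = x^3 Q(y), so the complex roots of P are the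
   solutions z of z + 1/z = y, y a root of Q.  Conditions (1)-(3) say exactly
   that Q(-1) < 0 < Q(0) and Q(1), Q(2) < 0, i.e. that Q has a root in (-1,0),
   one in (0,1) and one beyond 2.  The root beyond 2 is beta + 1/beta and
   yields the real roots beta, 1/beta of P; each root of Q in (-2,2) yields two
   conjugate roots of P on the unit circle.
   Irreducibility: a rational root of Q would be an integer, which the position
   of the roots forbids, so Q is irreducible over Q.  Write a rational factor q
   of P as q(z) = A(z + 1/z) z + B(z + 1/z).  If q(z) = 0 with z + 1/z = y, then
   B^2 + X A B + A^2 vanishes at y, hence at alpha1 since Q is irreducible; this
   quadratic form is definite for |alpha1| < 2, so Q divides A and B, and q
   vanishes at all six distinct roots of P. *)

Local Notation zpoly F p := (map_poly (fun z : int => z%:~R : F) p).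

Lemma size_traceQ a b c : size (traceQ a b c) = 4%N.
Proof.
apply/eqP; rewrite eqn_leq; apply/andP; split.
  apply/leq_sizeP => j hj; rewrite /traceQ !coefE.
  by case: j hj => [|[|[|[|j]]]] //= _; rewrite !mulr0 !subr0.
rewrite ltnNge; apply/negP => /leq_sizeP/(_ 3%N (leqnn _)); rewrite /traceQ !coefE /=.
by rewrite !mulr0 !subr0; apply/eqP; rewrite oner_neq0.
Qed.

Lemma monic_traceQ a b c : traceQ a b c \is monic.
Proof. by rewrite monicE /lead_coef size_traceQ /traceQ !coefE /= !mulr0 !subr0. Qed.

Lemma size_sextP a b c : size (sextP a b c) = 7%N.
Proof.
apply/eqP; rewrite eqn_leq; apply/andP; split.
  apply/leq_sizeP => j hj; rewrite /sextP !coefE.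
  by case: j hj => [|[|[|[|[|[|[|j]]]]]]] //= _; rewrite !mulr0 !subr0 ?addr0.
rewrite ltnNge; apply/negP => /leq_sizeP/(_ 6%N (leqnn _)); rewrite /sextP !coefE /=.
by rewrite !mulr0 !subr0 ?addr0; apply/eqP; rewrite oner_neq0.
Qed.

Lemma monic_sextP a b c : sextP a b c \is monic.
Proof. by rewrite monicE /lead_coef size_sextP /sextP !coefE /= !mulr0 !subr0 ?addr0. Qed.

Lemma traceQ_horner a b c (t : int) :
  (traceQ a b c).[t] = t ^+ 3 - a * t ^+ 2 - (b + 3) * t - (c - 2 * a).
Proof. by rewrite /traceQ !hornerE. Qed.

Lemma traceQ_sign_conditions a b c :
  [/\ 2 - 2 * b < 2 * a + c, c < 2 * a & `|b + 2| < c - a] <->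
  [/\ (traceQ a b c).[-1] < 0, 0 < (traceQ a b c).[0],
      (traceQ a b c).[1] < 0 & (traceQ a b c).[2] < 0].
Proof.
by rewrite !traceQ_horner ltr_norml; split=> [[? ? /andP[? ?]] | [? ? ? ?]]; split; lia.
Qed.

Lemma no_int_between (R : numDomainType) (n m : int) :
  m%:~R < n%:~R :> R -> n%:~R < (m + 1)%:~R :> R -> False.
Proof. by rewrite !ltr_int; lia. Qed.

Lemma size_zpoly (F : numDomainType) (p : {poly int}) : size (zpoly F p) = size p.
Proof. by rewrite size_map_inj_poly //; exact: intr_inj. Qed.

Lemma root_zpoly_int (F : numDomainType) (p : {poly int}) (n : int) :
  root (zpoly F p) n%:~R = root p n.
Proof. by rewrite /root horner_map intr_eq0. Qed.

Lemma map_ratr_zpoly (F : numFieldType) (p : {poly int}) :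
  map_poly ratr (zpoly rat p) = zpoly F p.
Proof. by rewrite -map_poly_comp; apply: eq_map_poly => z /=; rewrite ratr_int. Qed.

Lemma rat_root_monic_int (p : {poly int}) (r : rat) :
  p \is monic -> root (zpoly rat p) r -> r \is a Num.int.
Proof.
move=> mon_p pr; have : (ratr r : algC) \is a Num.int.
  apply: Cint_rat_Aint; first exact: Crat_rat.
  apply: (@root_monic_Aint (zpoly algC p)); last 2 first.
  - exact: monic_map.
  - by apply/polyOverP => i; rewrite coef_map rpred_int.
  by rewrite -map_ratr_zpoly fmorph_root.
case/intrP=> n; rewrite -(rmorph_int (ratr : rat -> algC)) => /fmorph_inj ->.
exact: rpred_int.
Qed.

Lemma sextP_horner (F : fieldType) a b c (x : F) : x != 0 ->
  (zpoly F (sextP a b c)).[x] = x ^+ 3 * (zpoly F (traceQ a b c)).[x + x^-1].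
Proof.
move=> x0; rewrite /sextP /traceQ.
rewrite !(rmorphB, rmorphD, rmorphM, map_polyX, map_polyC, map_polyXn, rmorph1) /=.
by rewrite !hornerE /= !map_polyX !map_polyC !hornerE /=; field.
Qed.

Lemma sextP_horner0 (F : fieldType) a b c : (zpoly F (sextP a b c)).[0] = 1.
Proof. by rewrite horner_coef0 coef_map /sextP !coefE /= !mulr0 !subr0 add0r. Qed.

Lemma root_sextP (F : fieldType) a b c (z : F) :
  root (zpoly F (sextP a b c)) z = (z != 0) && root (zpoly F (traceQ a b c)) (z + z^-1).
Proof.
have [-> | z0] := eqVneq z 0; first by rewrite /root sextP_horner0 oner_eq0.
by rewrite /root sextP_horner // mulf_eq0 expf_eq0 (negbTE z0).
Qed.

Lemma palindromic_decomposition (K F : fieldType) (f : {rmorphism K -> F})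
    (p : {poly K}) :
  exists A B : {poly K}, forall z : F, z != 0 ->
    (map_poly f p).[z] = (map_poly f A).[z + z^-1] * z + (map_poly f B).[z + z^-1].
Proof.
elim/poly_ind: p => [|p c [A [B IH]]].
  by exists 0, 0 => z _; rewrite !rmorph0 !horner0 mul0r addr0.
exists ('X * A + B), (c%:P - A) => z z0.
rewrite !(rmorphD, rmorphM, rmorphB, rmorphN) /= !map_polyX !map_polyC !hornerE /= IH //.
set u := (map_poly f A).[_]; set v := (map_poly f B).[_]; set r := f c.
by field.
Qed.

Lemma add_inv_eqE (F : fieldType) (z x : F) : z != 0 ->
  (z + z^-1 == x) = (z ^+ 2 - x * z + 1 == 0).
Proof.
move=> z0; have -> : z ^+ 2 - x * z + 1 = z * (z + z^-1 - x) by field.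
by rewrite mulf_eq0 (negbTE z0) subr_eq0.
Qed.

Lemma eq_add_inv (F : fieldType) (z w : F) : z != 0 -> w != 0 ->
  z + z^-1 = w + w^-1 -> z = w \/ z = w^-1.
Proof.
move=> z0 w0 e; have /eqP : (z - w) * (z - w^-1) = 0.
  have -> : (z - w) * (z - w^-1) = z * (z + z^-1 - (w + w^-1)).
    by field; rewrite w0 z0.
  by rewrite e subrr mulr0.
by rewrite mulf_eq0 !subr_eq0 => /orP[] /eqP; [left | right].
Qed.

Lemma norm_add_inv_real (R : rcfType) (z : R[i]) (x : R) :
  z != 0 -> -2 < x -> x < 2 -> z + z^-1 = x%:C%C -> `|z| = 1.
Proof.
case: z => u v z0 hx1 hx2 /eqP; rewrite add_inv_eqE // => /eqP.
move=> /(congr1 (fun w => (complex.Re w, complex.Im w))) /= [e1 e2].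
have v0 : v != 0.
  apply/eqP => v0; move: e1; rewrite v0 => e1.
  have := sqr_ge0 (2 * u - x); have : 0 < (2 - x) * (2 + x) by apply: mulr_gt0; lra.
  nra.
have /eqP : (2 * u - x) * v = 0 by rewrite -[RHS]e2; ring.
rewrite mulf_eq0 (negbTE v0) orbF subr_eq0 => /eqP hx.
rewrite normc_def /=; have -> : u ^+ 2 + v ^+ 2 = 1 by rewrite -hx in e1; nra.
by rewrite sqrtr1.
Qed.

Lemma add_inv_circle (R : rcfType) (x s : R) : s ^+ 2 = 1 - x ^+ 2 / 4 -> s != 0 ->
  (x / 2 +i* s)%C != 0 /\ (x / 2 +i* s)%C + (x / 2 +i* s)%C^-1 = x%:C%C.
Proof.
move=> hs s0; have w0 : (x / 2 +i* s)%C != 0.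
  by apply: contraNneq s0 => /(congr1 (@complex.Im R)) /= ->.
split=> //; apply/eqP; rewrite add_inv_eqE // eq_complex /=; apply/andP; split.
  by apply/eqP; rewrite -[s * s]expr2 hs; field.
by apply/eqP; field.
Qed.

Lemma sqrt_one_sub_quarter (R : rcfType) (x : R) : -2 < x -> x < 2 ->
  Num.sqrt (1 - x ^+ 2 / 4) ^+ 2 = 1 - x ^+ 2 / 4 /\ 0 < Num.sqrt (1 - x ^+ 2 / 4).
Proof.
move=> hx1 hx2; have hpos : 0 < 1 - x ^+ 2 / 4.
  have -> : 1 - x ^+ 2 / 4 = (2 - x) * (2 + x) / 4 by field.
  by apply: divr_gt0 => //; apply: mulr_gt0; lra.
by rewrite sqr_sqrtr ?ltW // sqrtr_gt0.
Qed.

Lemma quadratic_form_eq0 (R : realFieldType) (x u v : R) : -2 < x -> x < 2 ->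
  v ^+ 2 + x * u * v + u ^+ 2 = 0 -> u = 0 /\ v = 0.
Proof.
move=> hx1 hx2 e.
have k : 0 < (2 - x) * (2 + x) by apply: mulr_gt0; lra.
have u0 : u = 0.
  apply/eqP; rewrite -sqrf_eq0; apply/eqP.
  have := sqr_ge0 (2 * v + x * u); have := sqr_ge0 u; nra.
split=> //; apply/eqP; rewrite -sqrf_eq0; apply/eqP.
by rewrite -[RHS]e u0; ring.
Qed.

Lemma norm_root_quadratic (R : comPzRingType) (x z u v : R) :
  z ^+ 2 - x * z + 1 = 0 -> u * z + v = 0 -> v ^+ 2 + x * u * v + u ^+ 2 = 0.
Proof.
move=> hz huv.
have -> : v ^+ 2 + x * u * v + u ^+ 2 =
  (u * z + v) * (v + (x - z) * u) + u ^+ 2 * (z ^+ 2 - x * z + 1) by ring.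
by rewrite hz huv mul0r mulr0 addr0.
Qed.

Lemma irredp_dvdp_common_root (K F : fieldType) (f : {rmorphism K -> F})
    (p q : {poly K}) (x : F) :
  irreducible_poly p -> root (map_poly f p) x -> root (map_poly f q) x -> p %| q.
Proof.
move=> p_irr px qx; have rg : root (map_poly f (gcdp q p)) x.
  by rewrite gcdp_map root_gcd qx px.
have g1 : size (gcdp q p) != 1%N.
  apply: contraTneq rg => /eqP/size_poly1P [k k0 ->].
  by rewrite map_polyC rootC fmorph_eq0.
by rewrite -(eqp_dvdl _ (p_irr _ g1 (dvdp_gcdr _ _))) dvdp_gcdl.
Qed.

Lemma polyC_ofE (R : realType) (p : {poly int}) :
  polyC_of R p = map_poly (real_complex R) (polyR_of R p).
Proof.
by rewrite -map_poly_comp; apply: eq_map_poly => z /=; rewrite rmorph_int.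
Qed.

Lemma map_ratr_complexE (R : realType) (p : {poly rat}) :
  map_poly (ratr : rat -> R[i]) p = map_poly (real_complex R) (map_poly ratr p).
Proof. by rewrite -map_poly_comp; apply: eq_map_poly => r /=; rewrite fmorph_rat. Qed.

Definition placed_trace_roots (R : realType) (a b c : int) (beta al1 al2 gamma : R) :=
  [/\ gamma = beta + beta^-1, root (polyR_of R (traceQ a b c)) gamma,
      root (polyR_of R (traceQ a b c)) al1, root (polyR_of R (traceQ a b c)) al2
    & [/\ -1 < al1, al1 < 0, 0 < al2, al2 < 1 & 2 < gamma]].

Section PlacedTraceRoots.

Variables (R : realType) (a b c : int) (beta al1 al2 gamma : R).

(* Destructed at the start of each proof: [lra] only looks at hypotheses of the
   local context, not at section hypotheses. *)
Hypothesis placed : placed_trace_roots a b c beta al1 al2 gamma.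

Local Notation Q := (polyR_of R (traceQ a b c)).
Local Notation P := (polyC_of R (sextP a b c)).
Local Notation Qrat := (zpoly rat (traceQ a b c)).

Let beta_neq0 : beta != 0.
Proof.
have [gammaE _ _ _ [_ _ _ _ ?]] := placed.
by apply/eqP => beta0; move: gammaE; rewrite beta0 invr0 addr0 => ?; lra.
Qed.

Lemma traceQ_factor : Q = ('X - gamma%:P) * ('X - al1%:P) * ('X - al2%:P).
Proof.
have [_ Qg Q1 Q2 [? ? ? ? ?]] := placed.
have rs_roots : all (root Q) [:: gamma; al1; al2] by rewrite /= Qg Q1 Q2.
have rs_uniq : poly.uniq_roots [:: gamma; al1; al2].
  by rewrite uniq_rootsE /= !inE !negb_or !andbT -!andbA; apply/and3P; split;
    apply/eqP => e; lra.
rewrite (all_roots_prod_XsubC _ rs_roots rs_uniq); last by rewrite size_zpoly size_traceQ.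
by rewrite (monicP (monic_map _ (monic_traceQ a b c))) scale1r !big_cons big_nil mulr1 mulrA.
Qed.

Lemma traceQ_horner_int t :
  ((traceQ a b c).[t])%:~R = (t%:~R - gamma) * (t%:~R - al1) * (t%:~R - al2) :> R.
Proof.
have -> : ((traceQ a b c).[t])%:~R = Q.[t%:~R] :> R by rewrite horner_map.
by rewrite traceQ_factor !hornerE.
Qed.

Lemma traceQ_signs :
  [/\ (traceQ a b c).[-1] < 0, 0 < (traceQ a b c).[0],
      (traceQ a b c).[1] < 0 & (traceQ a b c).[2] < 0].
Proof.
have [_ _ _ _ [? ? ? ? ?]] := placed.
rewrite -(ltrz0 R) -(ltr0z R) -(ltrz0 R) -(ltrz0 R) !traceQ_horner_int /=.
have p12 : 0 < (1 - al1) * (1 - al2) by apply: mulr_gt0; lra.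
have m12 : 0 < (1 + al1) * (1 + al2) by apply: mulr_gt0; lra.
have t12 : 0 < (2 - al1) * (2 - al2) by apply: mulr_gt0; lra.
have z12 : 0 < - al1 * al2 by apply: mulr_gt0; lra.
split; nra.
Qed.

Lemma traceQ_irreducible : irreducible_poly Qrat.
Proof.
have [_ _ _ _ [? ? ? ? ?]] := placed.
apply: cubic_irreducible => [|r]; first by rewrite size_zpoly size_traceQ.
apply/negP => Qr; have /intrP [n rn] := rat_root_monic_int (monic_traceQ a b c) Qr.
rewrite rn root_zpoly_int in Qr.
have := Qr; rewrite -(root_zpoly_int R) -/(polyR_of R _) traceQ_factor.
rewrite !rootM !root_XsubC -orbA => /or3P[] /eqP n_root.
- (* Q = q (X - n) over Z, and evaluating at 0 shows q(0) = alpha1 alpha2. *)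
  have [q Qq] := factor_theorem _ _ Qr.
  have q0E : (q.[0])%:~R = al1 * al2 :> R.
    have := traceQ_horner_int 0; rewrite Qq !hornerE /= intrM intrN n_root => e.
    have /eqP : gamma * ((q.[0])%:~R - al1 * al2) = 0 by nra.
    by rewrite mulf_eq0 gt_eqF ?subr_eq0 => [/eqP|]; last lra.
  by apply: (@no_int_between R (q.[0]) (-1)); rewrite ?q0E ?rmorphN ?addNr /=; nra.
- by apply: (@no_int_between R n (-1)); rewrite ?n_root ?rmorphN ?addNr /=; lra.
- by apply: (@no_int_between R n 0); rewrite ?n_root ?add0r /=; lra.
Qed.

Lemma traceQ_rootC w :
  root (polyC_of R (traceQ a b c)) w -> [\/ w = gamma%:C, w = al1%:C | w = al2%:C]%C.
Proof.
rewrite polyC_ofE traceQ_factor !rmorphM !rmorphB /= !map_polyX !map_polyC /=.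
rewrite !rootM !root_XsubC -orbA => /or3P[] /eqP.
all: by [exact: Or31 | exact: Or32 | exact: Or33].
Qed.

Lemma sextP_rootsC z : root P z -> [\/ z = beta%:C, z = (beta^-1)%:C | `|z| = 1]%C.
Proof.
have [gammaE _ _ _ [? ? ? ? ?]] := placed.
rewrite /polyC_of root_sextP -/(polyC_of R _) => /andP[z0 /traceQ_rootC[] e].
- rewrite gammaE rmorphD fmorphV /= in e.
  have [] := eq_add_inv z0 _ e; rewrite ?fmorph_eq0 // => ->; first exact: Or31.
  by rewrite -fmorphV; exact: Or32.
- by apply: Or33; apply: (norm_add_inv_real z0 _ _ e); lra.
- by apply: Or33; apply: (norm_add_inv_real z0 _ _ e); lra.
Qed.

Lemma root_sextPC z :
  root P z <-> z != 0 /\ exists2 x, root Q x & z + z^-1 = x%:C%C.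
Proof.
have [_ Qg Q1 Q2 _] := placed.
rewrite /polyC_of root_sextP -/(polyC_of R _).
split=> [/andP[z0 /traceQ_rootC] | [z0 [x Qx ->]]].
  by move=> w; split=> //; case: w => ->; [exists gamma | exists al1 | exists al2].
by rewrite z0 /root polyC_ofE horner_map fmorph_eq0.
Qed.

Lemma traceQ_dvdp_of_root (p : {poly rat}) x :
  root Q x -> root (map_poly ratr p) x -> Qrat %| p.
Proof.
move=> Qx; apply: (irredp_dvdp_common_root (f := ratr) traceQ_irreducible).
by rewrite map_ratr_zpoly.
Qed.

Lemma root_of_traceQ_dvdp (p : {poly rat}) y :
  Qrat %| p -> root Q y -> root (map_poly ratr p) y.
Proof. by case/dvdpP=> h ->; rewrite rmorphM /= rootM map_ratr_zpoly => ->; rewrite orbT. Qed.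

Lemma traceQ_dvdp_palindromic_parts (q A B : {poly rat}) z :
  (forall w : R[i], w != 0 -> (map_poly ratr q).[w] =
     (map_poly ratr A).[w + w^-1] * w + (map_poly ratr B).[w + w^-1]) ->
  root P z -> root (map_poly ratr q) z -> Qrat %| A /\ Qrat %| B.
Proof.
have [_ _ Q1 _ [? ? ? ? ?]] := placed.
move=> qAB /root_sextPC [z0 [x Qx zx]] qz.
pose D := B ^+ 2 + 'X * A * B + A ^+ 2.
have DE y : (map_poly ratr D).[y] = (map_poly ratr B).[y] ^+ 2 +
    y * (map_poly ratr A).[y] * (map_poly ratr B).[y] + (map_poly ratr A).[y] ^+ 2 :> R.
  by rewrite !(rmorphD, rmorphM, rmorphXn) /= map_polyX !hornerE.
have Dx : root (map_poly ratr D) x.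
  have quad : z ^+ 2 - x%:C%C * z + 1 = 0 by apply/eqP; rewrite -add_inv_eqE // zx.
  have lin : ((map_poly ratr A).[x])%:C%C * z + ((map_poly ratr B).[x])%:C%C = 0.
    by apply/eqP; move: qz; rewrite /root qAB // zx !map_ratr_complexE !horner_map.
  have := @norm_root_quadratic R[i] _ _ _ _ quad lin.
  move=> e; rewrite /root DE -(@fmorph_eq0 _ _ (real_complex R)).
  by rewrite !(rmorphXn, rmorphD, rmorphM) e.
have [A1 B1] : (map_poly ratr A).[al1] = 0 /\ (map_poly ratr B).[al1] = 0 :> R.
  apply: (@quadratic_form_eq0 _ al1); [lra | lra | rewrite -DE; apply/eqP].
  exact: root_of_traceQ_dvdp (traceQ_dvdp_of_root Qx Dx) Q1.
by split; apply: (traceQ_dvdp_of_root Q1); apply/eqP.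
Qed.

Lemma sextP_factor_roots (q : {poly rat}) z w :
  root P z -> root (map_poly ratr q) z -> root P w -> root (map_poly ratr q) w.
Proof.
have [A [B qAB]] := palindromic_decomposition (ratr : {rmorphism rat -> R[i]}) q.
move=> Pz qz /root_sextPC [w0 [y Qy wy]].
have [QA QB] := traceQ_dvdp_palindromic_parts qAB Pz qz.
rewrite /root qAB // wy !map_ratr_complexE !horner_map.
rewrite (eqP (root_of_traceQ_dvdp QA Qy)) (eqP (root_of_traceQ_dvdp QB Qy)).
by rewrite rmorph0 mul0r addr0.
Qed.

Lemma root_sextP_circle x s :
  root Q x -> s ^+ 2 = 1 - x ^+ 2 / 4 -> s != 0 -> root P (x / 2 +i* s)%C.
Proof.
move=> Qx sE s0; have [w0 e] := add_inv_circle sE s0.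
by apply/root_sextPC; split=> //; exists x.
Qed.

Lemma sextP_six_roots : exists rs : seq R[i], [/\ size rs = 6%N, uniq rs & all (root P) rs].
Proof.
have [gammaE Qg Q1 Q2 [? ? ? ? ?]] := placed.
have beta_neq_inv : beta != beta^-1.
  apply/eqP => e; have bi : beta * beta^-1 = 1 by rewrite mulfV.
  by move: gammaE; rewrite e => ?; nra.
have [s1E s1_gt0] := @sqrt_one_sub_quarter _ al1 (ltac:(lra)) (ltac:(lra)).
have [s2E s2_gt0] := @sqrt_one_sub_quarter _ al2 (ltac:(lra)) (ltac:(lra)).
set s1 := Num.sqrt _ in s1E s1_gt0; set s2 := Num.sqrt _ in s2E s2_gt0.
have s1N : (- s1) ^+ 2 = 1 - al1 ^+ 2 / 4 by rewrite sqrrN.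
have s2N : (- s2) ^+ 2 = 1 - al2 ^+ 2 / 4 by rewrite sqrrN.
exists [:: beta%:C; (beta^-1)%:C; (al1 / 2 +i* s1); (al1 / 2 +i* - s1);
  (al2 / 2 +i* s2); (al2 / 2 +i* - s2)]%C; split=> //.
  rewrite /= !inE !eq_complex /= !negb_or (negbTE beta_neq_inv) /= !andbT.
  by repeat (apply/andP; split); apply/negP => /andP[/eqP ? /eqP ?]; lra.
rewrite /= andbT; repeat (apply/andP; split).
- apply/root_sextPC; split; first by rewrite fmorph_eq0.
  by exists gamma; rewrite // gammaE rmorphD /= fmorphV.
- apply/root_sextPC; split; first by rewrite fmorph_eq0 invr_eq0.
  by exists gamma; rewrite // gammaE rmorphD /= fmorphV invrK addrC.
all: by apply: root_sextP_circle; rewrite // ?oppr_eq0 gt_eqF.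
Qed.

Lemma sextP_unit_root : exists2 z, root P z & `|z| = 1.
Proof.
have [_ _ Q1 _ [? ? ? ? ?]] := placed.
have [sE s_gt0] := @sqrt_one_sub_quarter _ al1 (ltac:(lra)) (ltac:(lra)).
have s0 := lt0r_neq0 s_gt0.
exists (al1 / 2 +i* Num.sqrt (1 - al1 ^+ 2 / 4))%C; first exact: root_sextP_circle.
have [w0 e] := add_inv_circle sE s0.
by apply: (norm_add_inv_real w0 _ _ e); lra.
Qed.

Lemma sextP_irreducible : irreducible_poly (zpoly rat (sextP a b c)).
Proof.
split=> [|q q1 qP]; first by rewrite size_zpoly size_sextP.
have P0 : zpoly rat (sextP a b c) != 0 by rewrite -size_poly_eq0 size_zpoly size_sextP.
have q0 : q != 0 by apply: contraTneq qP => ->; rewrite dvd0p.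
have [z qz] : exists z, root (map_poly (ratr : rat -> R[i]) q) z.
  by apply/closed_rootP; rewrite size_map_poly.
have Pz : root P z by apply: root_dvdp qz; rewrite /polyC_of -map_ratr_zpoly dvdp_map.
have [rs [rs6 rs_uniq Prs]] := sextP_six_roots.
have : (size rs < size (map_poly (ratr : rat -> R[i]) q))%N.
  apply: max_poly_roots => //; first by rewrite map_poly_eq0.
  by apply/allP => w /(allP Prs); apply: sextP_factor_roots Pz qz.
rewrite size_map_poly rs6 => q_gt6.
have := dvdp_leq P0 qP; rewrite size_zpoly size_sextP => q_le7.
by rewrite -dvdp_size_eqp // size_zpoly size_sextP eqn_leq q_gt6 q_le7.
Qed.

End PlacedTraceRoots.

Lemma exists_placed_trace_roots (R : realType) (a b c : int) (beta : R) :
  1 < beta -> root (polyR_of R (sextP a b c)) beta ->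
  (traceQ a b c).[-1] < 0 -> 0 < (traceQ a b c).[0] -> (traceQ a b c).[1] < 0 ->
  exists al1 al2, placed_trace_roots a b c beta al1 al2 (beta + beta^-1).
Proof.
move=> beta_gt1; rewrite /polyR_of root_sextP -/(polyR_of R _) => /andP[beta0 Qg] Qm1 Q0 Q1.
have ev t : (polyR_of R (traceQ a b c)).[t%:~R] = ((traceQ a b c).[t])%:~R.
  exact: horner_map.
move: (ev (-1)) (ev 0) (ev 1); rewrite rmorphN1 rmorph0 rmorph1 => em1 e0 e1.
have [al1 al1_in Q_al1] : {x | x \in `]-1, 0[ & root (polyR_of R (traceQ a b c)) x}.
  by apply: poly_ivtoo; rewrite ?em1 ?e0 ?nmulr_rlt0 ?ltrz0 ?ltr0z //; lra.
have [al2 al2_in Q_al2] : {x | x \in `]0, 1[ & root (polyR_of R (traceQ a b c)) x}.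
  by apply: poly_ivtoo; rewrite ?e0 ?e1 ?pmulr_rlt0 ?ltrz0 ?ltr0z //; lra.
move: al1_in al2_in; rewrite !in_itv /= => /andP[? ?] /andP[? ?].
exists al1, al2; split=> //; split=> //.
have bi : beta * beta^-1 = 1 by rewrite mulfV.
have : 0 < beta^-1 by rewrite invr_gt0; lra.
nra.
Qed.

Theorem lemma4 (R : realType) (beta : R) (hbeta : 1 < beta) :
  well_posed_salem6 beta <->
  exists a b c : int,
    [/\ dominant_root (sextP a b c) beta,
        2 - 2 * b < 2 * a + c,
        c < 2 * a
      & `|b + 2| < c - a].
Proof.
have beta_gt0 : 0 < beta by apply: lt_trans hbeta.
have beta_inv_gt0 : 0 < beta^-1 by rewrite invr_gt0.
have beta_inv_lt1 : beta^-1 < 1 by rewrite invf_lt1.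
have normC_pos x : 0 < x -> `|x%:C%C| = x%:C%C :> R[i].
  by move=> x_gt0; rewrite gtr0_norm ?ltcR.
have normC_beta := normC_pos _ beta_gt0.
have oneC : 1 = 1%:C%C :> R[i] by [].
split.
- case=> _ [a [b [c [[_ _ Pbeta] [al1 [al2 [gamma placed]]]]]]].
  exists a, b, c.
  have [c1 c2 c3] := (traceQ_sign_conditions a b c).2 (traceQ_signs placed).
  split=> //; split=> // z /(sextP_rootsC placed) [->|->|->] //;
    by rewrite normC_beta ?normC_pos ?oneC ?lecR //; lra.
- case=> a [b [c [[Pbeta _] c1 c2 c3]]].
  have [Qm1 Q0 Q1 _] := (traceQ_sign_conditions a b c).1 (And3 c1 c2 c3).
  have [al1 [al2 placed]] := exists_placed_trace_roots hbeta Pbeta Qm1 Q0 Q1.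
  have Pmin : is_min_poly_int (sextP a b c) beta.
    by split; [exact: monic_sextP | exact: sextP_irreducible placed |].
  split; last by exists a, b, c; split=> //; exists al1, al2, (beta + beta^-1).
  split=> //; exists (sextP a b c); split=> //.
    move=> z /(sextP_rootsC placed) [-> /eqP //|->|->] _ //.
    by rewrite normC_pos ?oneC ?lecR //; lra.
  by have [z Pz z1] := sextP_unit_root placed; exists z.
Qed.
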